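(* For every integer $k\geq 1$, in $\mathbb{Q}(t)$, $$\frac{2-t}{t^{\lfloor\log_2 k\rfloor}}\cdot\frac{S_{2k+1}(t)}{B_{2k+1}(t)}=\frac{2-t}{t^{\lfloor\log_2 k\rfloor}}\cdot\frac{S_k(t)}{B_k(t)}+\frac{B_{k+1}(t)-(t-1)(B_k(t)+1)}{B_k(t)B_{2k+1}(t)}.$$
   Context: The Stern polynomials $B_n(t)\in\mathbb{Z}[t]$ are defined by $B_0(t)=0$, $B_1(t)=1$, and for $n\geq 1$: $B_{2n}(t)=tB_n(t)$, $B_{2n+1}(t)=B_n(t)+B_{n+1}(t)$ (and $B_n\neq 0$ for $n\ge1$). The polynomials $S_n(t)$, $n\ge1$, are defined by $S_1(t)=S_2(t)=0$ and, for $k\geq 1$, $S_{2k}(t)=tS_k(t)$, $S_{2k+1}(t)=S_k(t)+S_{k+1}(t)+t^{\lfloor\log_2 k\rfloor}$. *)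

From HB Require Import structures.
From mathcomp Require Import all_boot all_order all_algebra.
From Stdlib Require Import Lia.
Set Implicit Arguments. Unset Strict Implicit. Unset Printing Implicit Defensive.
Import Order.TTheory GRing.Theory Num.Theory.
Local Open Scope ring_scope.

(* Fuel-based evaluation of the recursions; the fuel n is sufficient. *)
Fixpoint Bf (fuel n : nat) : {poly rat} :=
  match fuel with
  | 0%N => 0
  | f.+1 =>
    if (n <= 1)%N then n%:R
    else if odd n then Bf f n./2 + Bf f (n./2).+1
    else 'X * Bf f n./2
  end.

Definition B (n : nat) : {poly rat} := Bf n n.

Fixpoint Sf (fuel n : nat) : {poly rat} :=
  match fuel with
  | 0%N => 0
  | f.+1 =>
    if (n <= 2)%N then 0
    else if odd n then Sf f n./2 + Sf f (n./2).+1 + 'X ^+ trunc_log 2 n./2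
    else 'X * Sf f n./2
  end.

(* S_n(t) for n >= 1 (S_0 is set to 0, it is never used). *)
Definition S (n : nat) : {poly rat} := Sf n n.

Lemma half_le n : (1 < n)%N -> (n./2 <= n.-1)%N.
Proof.
case: n => [|[|m]] // _; rewrite leq_half_double /= -addnn.
by rewrite !addnS !addSn !ltnS ltnW // ltnS leq_addr.
Qed.

Lemma half_odd_le n : (1 < n)%N -> odd n -> ((n./2).+1 <= n.-1)%N.
Proof.
case: n => [|[|[|m]]] // _ _; rewrite ltn_half_double /= -addnn.
by rewrite !addnS !addSn !ltnS leq_addr.
Qed.

Lemma Bf_fuel f g n : (n <= f)%N -> (n <= g)%N -> Bf f n = Bf g n.
Proof.
elim: f g n => [|f IH] [|g] n /=; rewrite ?leqn0 //.
- by move=> /eqP -> _.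
- by move=> _ /eqP ->.
move=> hf hg; case: ifP => // h1; have h1' : (1 < n)%N by rewrite ltnNge h1.
have hn : (n.-1 <= f)%N by rewrite -ltnS (ltn_predK h1').
have hn' : (n.-1 <= g)%N by rewrite -ltnS (ltn_predK h1').
have a := half_le h1'.
have a1 := leq_trans a hn; have a2 := leq_trans a hn'.
case: ifP => ho; last by rewrite (IH g).
have b := half_odd_le h1' ho.
have b1 := leq_trans b hn; have b2 := leq_trans b hn'.
by rewrite (IH g) // (IH g (n./2).+1).
Qed.

Lemma Sf_fuel f g n : (n <= f)%N -> (n <= g)%N -> Sf f n = Sf g n.
Proof.
elim: f g n => [|f IH] [|g] n /=; rewrite ?leqn0 //.
- by move=> /eqP -> _.
- by move=> _ /eqP ->.
move=> hf hg; case: ifP => // h1; have h1' : (1 < n)%N by apply: ltnW; rewrite ltnNge h1.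
have hn : (n.-1 <= f)%N by rewrite -ltnS (ltn_predK h1').
have hn' : (n.-1 <= g)%N by rewrite -ltnS (ltn_predK h1').
have a := half_le h1'.
have a1 := leq_trans a hn; have a2 := leq_trans a hn'.
case: ifP => ho; last by rewrite (IH g).
have b := half_odd_le h1' ho.
have b1 := leq_trans b hn; have b2 := leq_trans b hn'.
by rewrite (IH g) // (IH g (n./2).+1).
Qed.


Lemma Bf_S f n : Bf f.+1 n =
  if (n <= 1)%N then n%:R
  else if odd n then Bf f n./2 + Bf f (n./2).+1 else 'X * Bf f n./2.
Proof. by []. Qed.

Lemma Sf_S f n : Sf f.+1 n =
  if (n <= 2)%N then 0
  else if odd n then Sf f n./2 + Sf f (n./2).+1 + 'X ^+ trunc_log 2 n./2
  else 'X * Sf f n./2.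
Proof. by []. Qed.

Lemma B_rec n : (1 < n)%N ->
  B n = if odd n then B n./2 + B (n./2).+1 else 'X * B n./2.
Proof.
move=> h; have a := half_le h; have b := half_odd_le h.
have -> : B n = Bf n.-1.+1 n by rewrite (ltn_predK h).
rewrite Bf_S leqNgt h /=.
rewrite (@Bf_fuel n.-1 (n./2) (n./2)) //.
case: ifP => ho //.
by rewrite (@Bf_fuel n.-1 (n./2).+1 (n./2).+1) // b.
Qed.

Lemma S_rec n : (2 < n)%N ->
  S n = if odd n then S n./2 + S (n./2).+1 + 'X ^+ trunc_log 2 n./2
        else 'X * S n./2.
Proof.
move=> h; have h' : (1 < n)%N by apply: ltnW.
have a := half_le h'; have b := half_odd_le h'.
have -> : S n = Sf n.-1.+1 n by rewrite (ltn_predK h).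
rewrite Sf_S leqNgt h /=.
rewrite (@Sf_fuel n.-1 (n./2) (n./2)) //.
case: ifP => ho //.
by rewrite (@Sf_fuel n.-1 (n./2).+1 (n./2).+1) // b.
Qed.

Lemma B_0 : B 0 = 0. Proof. by []. Qed.
Lemma B_1 : B 1 = 1. Proof. by []. Qed.

Lemma B_even n : (1 <= n)%N -> B (n.*2) = 'X * B n.
Proof.
move=> h; rewrite B_rec ?odd_double ?doubleK //.
by rewrite -addnn -add1n leq_add.
Qed.

Lemma B_odd n : (1 <= n)%N -> B (n.*2.+1) = B n + B n.+1.
Proof.
move=> h; rewrite B_rec /= ?odd_double ?uphalf_double //.
by rewrite ltnS -addnn (leq_trans h) ?leq_addr.
Qed.

Lemma S_1 : S 1 = 0. Proof. by []. Qed.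
Lemma S_2 : S 2 = 0. Proof. by []. Qed.

Lemma S_even n : (1 <= n)%N -> S (n.*2) = 'X * S n.
Proof.
case: n => [|[|n]] // _; first by rewrite /S /= mulr0.
by rewrite S_rec ?odd_double ?doubleK // -addnn !addnS !addSn !ltnS.
Qed.

Lemma S_odd n : (1 <= n)%N ->
  S (n.*2.+1) = S n + S n.+1 + 'X ^+ trunc_log 2 n.
Proof.
move=> h; rewrite S_rec /= ?odd_double ?uphalf_double //.
by rewrite ltnS -addnn -add1n leq_add.
Qed.

From HB Require Import structures.
From mathcomp Require Import all_boot all_order all_algebra fraction.
From mathcomp Require Import ring zify.
Import Order.TTheory GRing.Theory Num.Theory.
Local Open Scope ring_scope.

(* Write l(k) = floor(log_2 k) = trunc_log 2 k and consider the
   Casoratian W_k = S_{k+1} B_k - S_k B_{k+1} of the two sequences.  Since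
   B_{2k+1} = B_k + B_{k+1} and S_{2k+1} = S_k + S_{k+1} + t^l(k), clearing the
   denominators t^l(k) B_k B_{2k+1} reduces the theorem to the polynomial
   identity
       (2 - t) W_k = t^l(k) (B_{k+1} - B_k + 1 - t)                     (key)
   together with B_k <> 0 for k >= 1.  The defining recursions give
       W_{2j} = t W_j + t^(l(j)+1) B_j,    W_{2j+1} = t W_j - t^(l(j)+1) B_{j+1},
   and l(2j) = l(2j+1) = l(j) + 1, so (key) follows by binary induction on k.
   Non-vanishing of B_k holds because B_k(1) is the Stern diatomic number,
   which is positive. *)

Lemma binary_ind (P : nat -> Prop) :
  P 1%N -> (forall j, (1 <= j)%N -> P j -> P j.*2 /\ P j.*2.+1) ->
  forall k, (1 <= k)%N -> P k.
Proof.
move=> P1 Pstep; elim/ltn_ind=> k IH k_gt0.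
have [k_gt1 | k_le1] := ltnP 1 k; last by have -> : k = 1%N by lia.
have ek := odd_double_half k; set j := k./2 in ek *.
have j_gt0 : (1 <= j)%N by case: (odd k) ek => /= ek; lia.
have j_lt_k : (j < k)%N by case: (odd k) ek => /= ek; lia.
have [Pe Po] := Pstep _ j_gt0 (IH j j_lt_k j_gt0).
by rewrite -ek; case: (odd k).
Qed.

(* B_k(1) is Stern's diatomic sequence, positive for k >= 1; consecutive
   values are carried together since B_{2j+1} involves both B_j and B_{j+1}. *)
Lemma B_at1_gt0 k : (1 <= k)%N -> 0 < (B k).[1].
Proof.
pose P k := 0 < (B k).[1] /\ 0 < (B k.+1).[1].
suff /(_ k) PB : forall k, (1 <= k)%N -> P k by move=> /PB [].
apply: binary_ind.
  by rewrite /P (B_even (n := 1)) // B_1 hornerM hornerX hornerC mulr1.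
have B_double_at1 j : (1 <= j)%N -> (B j.*2).[1] = (B j).[1].
  by move=> j_gt0; rewrite B_even // hornerM hornerX mul1r.
move=> j j_gt0 [Bj Bj1]; rewrite /P -doubleS.
have B_odd_at1 : 0 < (B j.*2.+1).[1] by rewrite B_odd // hornerD addr_gt0.
by rewrite !B_double_at1.
Qed.

Lemma B_neq0 k : (1 <= k)%N -> B k != 0.
Proof. by move=> /B_at1_gt0; apply: contraTneq => ->; rewrite horner0. Qed.

Definition W (k : nat) : {poly rat} := S k.+1 * B k - S k * B k.+1.

Lemma W_even j : (1 <= j)%N ->
  W j.*2 = 'X * W j + 'X ^+ (trunc_log 2 j).+1 * B j.
Proof. by move=> j_gt0; rewrite /W S_odd // S_even // B_odd // B_even // exprS; ring. Qed.

Lemma W_odd j : (1 <= j)%N ->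
  W j.*2.+1 = 'X * W j - 'X ^+ (trunc_log 2 j).+1 * B j.+1.
Proof.
move=> j_gt0; rewrite /W -doubleS S_odd // S_even // B_odd // B_even //.
by rewrite exprS; ring.
Qed.

Lemma trunc_log2_double_succ j :
  (1 <= j)%N -> trunc_log 2 j.*2.+1 = (trunc_log 2 j).+1.
Proof. by move=> j_gt0; rewrite trunc_log2S /= ?uphalf_double // ltnS double_gt0. Qed.

Lemma Casoratian_identity k : (1 <= k)%N ->
  (2 - 'X) * W k = 'X ^+ trunc_log 2 k * (B k.+1 - B k + 1 - 'X).
Proof.
move: k; apply: binary_ind.
  by rewrite /W S_1 S_2 B_1 (B_even (n := 1)) // trunc_log1 expr0; ring.
move=> j j_gt0 IH; split.
- rewrite W_even // trunc_log2_double // B_odd // B_even // exprS.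
  by rewrite mulrDr mulrCA IH; ring.
- rewrite W_odd // trunc_log2_double_succ // -doubleS B_odd // B_even // exprS.
  by rewrite mulrBr mulrCA IH; ring.
Qed.

(* Reduction in an arbitrary field: with x = t, T = t^l(k), b = B_k,
   b' = B_{k+1}, s = S_k, s' = S_{k+1}, the theorem is (key) divided by
   T b (b + b'). *)
Lemma field_reduction (K : fieldType) (x s s' b b' T : K) :
  T != 0 -> b != 0 -> b + b' != 0 ->
  (2 - x) * (s' * b - s * b') = T * (b' - b + 1 - x) ->
  (2 - x) / T * ((s + s' + T) / (b + b')) =
  (2 - x) / T * (s / b) + (b' - (x - 1) * (b + 1)) / (b * (b + b')).
Proof.
move=> T_neq0 b_neq0 bb'_neq0 key; apply/eqP; rewrite -subr_eq0; apply/eqP.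
transitivity (((2 - x) * (s' * b - s * b') - T * (b' - b + 1 - x))
                / (T * b * (b + b'))); first by field; rewrite T_neq0 b_neq0 bb'_neq0.
by rewrite key subrr mul0r.
Qed.

Theorem mainTheorem14 (k : nat) (hk : (1 <= k)%N) :
  let t : {fraction {poly rat}} := FracField.tofrac ('X : {poly rat}) in
  let F (p : {poly rat}) : {fraction {poly rat}} := FracField.tofrac p in
  (2 - t) / t ^+ trunc_log 2 k * (F (S k.*2.+1) / F (B k.*2.+1)) =
  (2 - t) / t ^+ trunc_log 2 k * (F (S k) / F (B k))
  + (F (B k.+1) - (t - 1) * (F (B k) + 1)) / (F (B k) * F (B k.*2.+1)).
Proof.
move=> t F.
have Bk_neq0 := B_neq0 k hk.
have Bodd_neq0 : B k + B k.+1 != 0 by rewrite -B_odd // B_neq0.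
rewrite /t /F B_odd // S_odd // !tofracD tofracXn.
apply: field_reduction.
- by rewrite expf_neq0 // tofrac_eq0 polyX_eq0.
- by rewrite tofrac_eq0.
- by rewrite -tofracD tofrac_eq0.
have := congr1 (@FracField.tofrac _) (Casoratian_identity k hk).
by rewrite ?(rmorphM, rmorphB, rmorphD, rmorphXn, rmorph1).
Qed.
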